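(* Let $p\ne q$ be primes, $G=\mathbb{Z}_p^2\times\mathbb{Z}_q^2$, and $A\subseteq G$ with $|A|\ge pq$. Then either $A$ is a tile of $G$ and $|A|=pq$, or for all nonzero $a\in\mathbb{Z}_p^2$ and nonzero $b\in\mathbb{Z}_q^2$ at least one of the directions $[a,0]$, $[0,b]$, $[a,b]$ belongs to $\mathcal{D}(A)$.
   Context: Elements of $G$ are written $(a,b)$ with $a\in\mathbb{Z}_p^2$, $b\in\mathbb{Z}_q^2$. For $v,w\in G$, $v\sim w$ if they generate the same cyclic subgroup; the class of $(a,b)$ is the direction $[a,b]$. $\mathcal{D}(A)$ is the set of directions $[v]$ for which some $w\in A-A$ satisfies $w\sim v$. $A$ is a tile of $G$ if there is $T\subseteq G$ with $A+T=G$ and $|A||T|=|G|$. *)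

From HB Require Import structures.
From mathcomp Require Import all_boot all_order all_algebra.
Set Implicit Arguments. Unset Strict Implicit. Unset Printing Implicit Defensive.
Import GRing.Theory.
Local Open Scope ring_scope.

Definition Gpq (p q : nat) := ('rV['Z_p]_2 * 'rV['Z_q]_2)%type.
HB.instance Definition _ p q := GRing.Zmodule.on (Gpq p q).
HB.instance Definition _ p q := Finite.on (Gpq p q).

Section Generic.
Variable V : finZmodType.

Definition cyc (v : V) : {set V} := [set v *+ n | n : 'I_#|V|.+1].

Definition same_dir (v w : V) : bool := cyc v == cyc w.

Definition diffset (A : {set V}) : {set V} := [set x - y | x in A, y in A].

Definition in_dirset (A : {set V}) (v : V) : Prop :=
  exists2 w, w \in diffset A & same_dir w v.

Definition sumset (A T : {set V}) : {set V} := [set x + y | x in A, y in T].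

Definition is_tile (A : {set V}) : Prop :=
  exists T : {set V}, sumset A T = [set: V] /\ (#|A| * #|T| = #|V|)%N.
End Generic.

From mathcomp Require Import all_boot all_order all_algebra.
From mathcomp Require Import fingroup cyclic.
Set Implicit Arguments. Unset Strict Implicit. Unset Printing Implicit Defensive.
Local Open Scope ring_scope.
Import GRing.Theory FinRing.Theory.

(* Suppose some nonzero a, b leave all of [a,0], [0,b], [a,b] outside D(A).
   Every nonzero element n(a,b) of the cyclic group K = <(a,b)> generates the
   same subgroup as (a,0), (0,b) or (a,b), according as q | n, p | n or
   neither, so A - A meets K only in 0 and the sum A + K is direct.  Since
   |K| = pq and |G| = (pq)^2, the bound |A| >= pq forces |A| = pq and
   A + K = G. *)

Section CyclicDirections.
Variable V : finZmodType.
Implicit Types (v : V) (A B : {set V}).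

Lemma cyc_cycle v : cyc v = <[v]>%g.
Proof.
apply/setP => x; apply/imsetP/cycleP => [[n _ ->]|[n ->]]; first by exists n.
have lt_mod : (n %% #[v]%g < #|V|.+1)%N.
  by rewrite ltnS (leq_trans _ (max_card (mem <[v]>%g))) // ltnW // ltn_mod order_gt0.
by exists (Ordinal lt_mod); rewrite //= -zmodXgE expg_mod_order.
Qed.

Lemma cycP v x : reflect (exists n, x = v *+ n) (x \in cyc v).
Proof. by rewrite cyc_cycle; apply: (iffP (cycleP _ _)) => -[n ->]; exists n. Qed.

Lemma diffset_cyc v : diffset (cyc v) \subset cyc v.
Proof.
rewrite cyc_cycle; apply/subsetP => _ /imset2P[x y xv yv ->].
by rewrite -zmodVgE groupM ?groupV.
Qed.

Lemma card_cyc v N : (forall n, (v *+ n == 0) = (N %| n)%N) -> #|cyc v| = N.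
Proof.
move=> annihilator; rewrite cyc_cycle -[#|_|]/#[v]%g; apply/eqP.
rewrite eqn_dvd order_dvdn zmodXgE zmod1gE annihilator dvdnn -annihilator.
by rewrite /= -zmodXgE expg_order zmod1gE.
Qed.

Lemma same_dir_mulrn v N n : v *+ N = 0 -> coprime N n -> same_dir (v *+ n) v.
Proof.
move=> vN0 coNn; rewrite /same_dir !cyc_cycle eq_sym -zmodXgE.
rewrite [_ == _]generator_coprime (coprime_dvdl _ coNn) // order_dvdn.
by rewrite zmodXgE vN0.
Qed.

Lemma card_sumset A B :
  (forall x, x \in diffset A -> x \in diffset B -> x = 0) ->
  #|sumset A B| = (#|A| * #|B|)%N.
Proof.
move=> direct; rewrite /sumset -cardsX curry_imset2X card_in_imset //.
move=> [x y] [x' y'] /setXP[xA yB] /setXP[x'A y'B] /= sum_eq.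
have dx : x - x' = y' - y.
  by apply/eqP; rewrite subr_eq addrAC [y' + x']addrC -sum_eq addrK.
have /eqP : x - x' = 0 by apply: direct; [|rewrite dx]; apply: imset2_f.
rewrite subr_eq0 => /eqP ex; congr (_, _) => //.
by move: sum_eq; rewrite ex => /addrI.
Qed.

End CyclicDirections.

Lemma mulrn_Zp_eq0 r (V : lmodType 'Z_r) (v : V) n :
  (1 < r)%N -> (r %| n)%N -> v *+ n = 0.
Proof.
move=> r_gt1 /dvdnP[k ->]; rewrite mulrnA -scaler_nat pchar_Zp //.
by rewrite scale0r.
Qed.

Lemma mulrn_Zp_eq0P r (V : lmodType 'Z_r) (v : V) n :
  prime r -> v != 0 -> (v *+ n == 0) = (r %| n)%N.
Proof.
move=> r_pr v0; have r_gt1 := prime_gt1 r_pr.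
apply/eqP/idP => [vn0|]; last exact: mulrn_Zp_eq0.
apply: contraNT v0 => r_n; have n_unit : (n%:R : 'Z_r) \is a GRing.unit.
  by rewrite unitZpE // prime_coprime.
by rewrite -[v]scale1r -(mulVr n_unit) -scalerA scaler_nat vn0 scaler0.
Qed.

Section Zp2Zq2.
Variables (p q : nat).
Hypotheses (p_pr : prime p) (q_pr : prime q) (p_neq_q : p != q).
Local Notation G := (Gpq p q).

Let p_gt1 := prime_gt1 p_pr.
Let q_gt1 := prime_gt1 q_pr.
Let coprime_pq : coprime p q. Proof. by rewrite prime_coprime // dvdn_prime2. Qed.

Lemma card_Gpq : #|{: G}| = (p * q * (p * q))%N.
Proof. by rewrite card_prod !card_mx !card_ord !Zp_cast // mulnACA. Qed.

Lemma mulrn_Gpq_eq0P (v : G) n :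
  v.1 != 0 -> v.2 != 0 -> (v *+ n == 0) = (p * q %| n)%N.
Proof.
move=> v1_0 v2_0; rewrite pairMnE -[0 : G]/(0, 0) xpair_eqE.
by rewrite !mulrn_Zp_eq0P // Gauss_dvd.
Qed.

Lemma same_dir_cyc (v w : G) :
    v.1 != 0 -> v.2 != 0 -> w \in cyc v -> w != 0 ->
  [\/ same_dir w (v.1, 0), same_dir w (0, v.2) | same_dir w v].
Proof.
move=> v1_0 v2_0 /cycP[n ->] wn0.
have [p_n|pNn] := boolP (p %| n)%N; have [q_n|qNn] := boolP (q %| n)%N.
- by move: wn0; rewrite mulrn_Gpq_eq0P // Gauss_dvd // p_n q_n.
- apply: Or32; have -> : v *+ n = ((0, v.2) : G) *+ n.
    by rewrite !pairMnE mul0rn (mulrn_Zp_eq0 _ p_gt1 p_n).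
  apply: (@same_dir_mulrn _ _ q); last by rewrite prime_coprime.
  by rewrite pairMnE mul0rn mulrn_Zp_eq0.
- apply: Or31; have -> : v *+ n = ((v.1, 0) : G) *+ n.
    by rewrite !pairMnE mul0rn (mulrn_Zp_eq0 _ q_gt1 q_n).
  apply: (@same_dir_mulrn _ _ p); last by rewrite prime_coprime.
  by rewrite pairMnE mul0rn mulrn_Zp_eq0.
- apply: Or33; apply: (@same_dir_mulrn _ _ (p * q)).
    by apply/eqP; rewrite mulrn_Gpq_eq0P.
  by rewrite coprimeMl !prime_coprime ?pNn.
Qed.

Lemma tile_of_diffset_cyc0 (A : {set G}) (v : G) :
  v.1 != 0 -> v.2 != 0 -> (p * q <= #|A|)%N ->
  (forall w, w \in diffset A -> w \in cyc v -> w = 0) ->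
  is_tile A /\ #|A| = (p * q)%N.
Proof.
move=> v1_0 v2_0 hA meet0.
have cardK : #|cyc v| = (p * q)%N by apply: card_cyc => n; apply: mulrn_Gpq_eq0P.
have cardAK : #|sumset A (cyc v)| = (#|A| * (p * q))%N.
  by rewrite -cardK; apply: card_sumset => w wA /(subsetP (diffset_cyc v)); apply: meet0.
have pq_gt0 : (0 < p * q)%N by rewrite muln_gt0 !prime_gt0.
have cardA : #|A| = (p * q)%N.
  apply/eqP; rewrite eqn_leq hA andbT -(leq_pmul2r pq_gt0) -card_Gpq -cardAK.
  exact: max_card.
split=> //; exists (cyc v); split; last by rewrite cardA cardK card_Gpq.
apply/eqP; rewrite eqEcard subsetT cardsT cardAK cardA /=; exact: eq_leq card_Gpq.
Qed.

End Zp2Zq2.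

Theorem lemma4p1 (p q : nat) (pp : prime p) (pq : prime q) (hpq : p != q)
  (A : {set Gpq p q}) (hA : (p * q <= #|A|)%N) :
  (is_tile A /\ #|A| = (p * q)%N) \/
  (forall (a : 'rV['Z_p]_2) (b : 'rV['Z_q]_2), a != 0 -> b != 0 ->
     in_dirset A ((a, 0 : 'rV['Z_q]_2) : Gpq p q) \/ in_dirset A ((0 : 'rV['Z_p]_2, b) : Gpq p q) \/
     in_dirset A ((a, b) : Gpq p q)).
Proof.
have [/existsP[v /and3P[v1_0 v2_0 meet0]]|no_meet0] := boolP
  [exists v : Gpq p q, [&& v.1 != 0, v.2 != 0 & diffset A :&: cyc v \subset [set 0]]].
  left; apply: (tile_of_diffset_cyc0 pp pq hpq v1_0 v2_0 hA) => w wA wv.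
  by apply/set1P; apply: (subsetP meet0); rewrite inE wA.
right=> a b a0 b0.
have /subsetPn[w /setIP[wA wab] /set1P/eqP w0] :
    ~~ (diffset A :&: cyc ((a, b) : Gpq p q) \subset [set 0]).
  by apply: contra no_meet0 => meet0; apply/existsP; exists (a, b); rewrite a0 b0.
by case: (@same_dir_cyc _ _ pp pq hpq (a, b) w a0 b0 wab w0) => dir;
  [left | right; left | right; right]; exists w.
Qed.
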